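(* For coalescing random walks on a finite Markov chain, $P_t=\mathbb{E}(N_t^{-1})$ for every $t\ge0$.
   Context: $(V,\mathbf r)$ is a continuous-time irreducible Markov chain on a finite set $V$ ($|V|=n$) with symmetric rates. Coalescing random walks are realised via the graphical representation: each directed edge $(x,y)$ rings at the times of an independent Poisson process of rate $r_{x,y}$, and every particle at $x$ at such a time moves to $y$. Let $X_1,\dots,X_n$ be the paths of the particles started at the $n$ distinct states (so particles at the same location coincide thereafter). For paths, $\mathcal C(P_1,\dots,P_k)=\inf\{t:P_1(t)=\dots=P_k(t)\}$. Let $\iota$ be uniform on $\{1,\dots,n\}$ independent of everything, and $N_t:=|\{i:\mathcal C(X_i,X_\iota)\le t\}|$. $P_t:=\mathbb{E}|\xi_t|/|V|$ where $\xi_t$ is the set of occupied states at time $t$. *)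

From HB Require Import structures.
From mathcomp Require Import all_boot all_order all_algebra finmap.
From mathcomp Require Import all_classical all_reals all_analysis.
Set Implicit Arguments. Unset Strict Implicit. Unset Printing Implicit Defensive.
Import Order.TTheory GRing.Theory Num.Theory.
Local Open Scope classical_set_scope.
Local Open Scope ring_scope.

(* a directed edge (x,y) carries a Poisson clock iff x <> y and r x y > 0 *)
Definition edge_ok (R : realType) (V : finType) (r : V -> V -> R) (e : V * V)
  : bool := (e.1 != e.2) && (0 < r e.1 e.2).

Definition irreducible_rates (R : realType) (V : finType) (r : V -> V -> R) :=
  forall x y : V, connect [rel a b | edge_ok r (a, b)] x y.

(* k-th (0-based) ring time of a clock with inter-arrival times W 0, W 1, ... *)
Definition ring_time (R : realType) (W : nat -> R) (k : nat) : R :=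
  \sum_(j < k.+1) W j.

Definition nrings (R : realType) (W : nat -> R) (t : R) : nat :=
  #|` fset_set [set k : nat | ring_time W k <= t] |.

Definition ring_events (R : realType) (V : finType) (r : V -> V -> R)
  (W : V * V -> nat -> R) (t : R) : seq (R * (V * V)) :=
  flatten [seq [seq (ring_time (W e) k, e) | k <- iota 0 (nrings (W e) t)]
          | e <- enum [set: V * V] & edge_ok r e].

Definition sorted_ring_events (R : realType) (V : finType) (r : V -> V -> R)
  (W : V * V -> nat -> R) (t : R) : seq (R * (V * V)) :=
  sort (fun a b : R * (V * V) => a.1 <= b.1) (ring_events r W t).

Definition crw_step (R : realType) (V : finType) (z : V) (ev : R * (V * V)) : V :=
  if z == ev.2.1 then ev.2.2 else z.

Definition crw_path (R : realType) (V : finType) (r : V -> V -> R)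
  (W : V * V -> nat -> R) (x : V) (t : R) : V :=
  foldl (@crw_step R V) x (sorted_ring_events r W t).

(* C(P1,P2) = inf {t >= 0 : P1 t = P2 t}  (in \bar R, inf of empty = +oo) *)
Definition coal_time (R : realType) (V : finType) (p1 p2 : R -> V) : \bar R :=
  ereal_inf (EFin @` [set s : R | 0 <= s /\ p1 s = p2 s]).

Definition occupied (R : realType) (V : finType) (r : V -> V -> R)
  (W : V * V -> nat -> R) (t : R) : {set V} :=
  [set crw_path r W x t | x : V].

Definition N_count (R : realType) (V : finType) (r : V -> V -> R)
  (W : V * V -> nat -> R) (io : V) (t : R) : nat :=
  #|[set i : V | (coal_time (crw_path r W i) (crw_path r W io) <= t%:E)%E]|.

Definition mutually_independent d (T : measurableType d) (R : realType)
  (P : probability T R) (I : choiceType) (S : set I) (X : I -> T -> R) :=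
  forall (J : {fset I}) (B : I -> set R),
    [set` J] `<=` S -> (forall i, measurable (B i)) ->
    P (\bigcap_(i in [set` J]) (X i @^-1` B i)) =
    (\prod_(i <- J) P (X i @^-1` B i))%E.

Definition generated_events d (T : measurableType d) (R : realType)
  (I : Type) (S : set I) (X : I -> T -> R) : set (set T) :=
  <<s [set A | exists i B, S i /\ measurable B /\ A = X i @^-1` B] >>.

(* Fix t and let Phi map x to X_x(t).  Two walks have met by time t iff their
   positions agree at t: once together they move together, and no clock rings
   in a right neighbourhood of t.  So |xi_t| is the size of the image of Phi and
   N_t the size of the fibre of Phi through iota; summing the inverse size of
   the fibre through v over all v counts every fibre once, giving the size of
   the image.  Phi depends only on the ring counts up to t and on the relative
   order of finitely many ring times, so it is measurable for the clocks, and
   independence and uniformity of iota give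
   E[1/N_t] = E[|V|^-1 sum_v 1/|fibre through v|] = E|xi_t| / |V|. *)

From HB Require Import structures.
From mathcomp Require Import all_boot all_order all_algebra finmap.
From mathcomp Require Import all_classical all_reals all_analysis.
From mathcomp Require Import measurable_realfun.
Set Implicit Arguments. Unset Strict Implicit. Unset Printing Implicit Defensive.
Import Order.TTheory GRing.Theory Num.Theory.
Local Open Scope classical_set_scope.
Local Open Scope ring_scope.
Local Notation filter := seq.filter.

Section MeasurableFibers.
Context d (T : measurableType d).

Definition measurable_fibers (X : countType) (f : T -> X) :=
  forall x, measurable (f @^-1` [set x]).

Lemma measurable_fibers_bind (X Y : countType) (c : T -> X) (F : X -> T -> Y) :
  measurable_fibers c -> (forall x, measurable_fibers (F x)) ->
  measurable_fibers (fun w => F (c w) w).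
Proof.
move=> mc mF y.
pose A n : set T := if choice.unpickle n is Some x
  then c @^-1` [set x] `&` F x @^-1` [set y] else set0.
have -> : (fun w => F (c w) w) @^-1` [set y] = \bigcup_n A n.
  apply/seteqP; split=> w.
    by move=> Fy; exists (choice.pickle (c w)) => //; rewrite /A choice.pickleK.
  by case=> n _; rewrite /A; case: (choice.unpickle n) => [x [/= -> ->]|].
apply: bigcupT_measurable => n; rewrite /A; case: (choice.unpickle n) => [x|].
  by apply: measurableI; [exact: mc | exact: mF].
exact: measurable0.
Qed.

Lemma measurable_fibers_cst (X : countType) (x0 : X) :
  measurable_fibers (fun _ : T => x0).
Proof. by move=> x; rewrite preimage_cst; case: ifP. Qed.

Lemma measurable_fibers_comp (X Y : countType) (c : T -> X) (h : X -> Y) :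
  measurable_fibers c -> measurable_fibers (h \o c).
Proof.
move=> mc; apply: (measurable_fibers_bind (F := fun x _ => h x)) => // x.
exact: measurable_fibers_cst.
Qed.

Lemma measurable_fibers_ffun (K : finType) (X : countType) (f : K -> T -> X) :
  (forall k, measurable_fibers (f k)) ->
  measurable_fibers (fun w => [ffun k => f k w]).
Proof.
move=> mf g.
have -> : (fun w => [ffun k => f k w]) @^-1` [set g] =
    \bigcap_(k in [set: K]) (f k @^-1` [set g k]).
  apply/seteqP; split=> w /=; first by move=> <- k _; rewrite /= ffunE.
  by move=> fg; apply/ffunP => k; rewrite ffunE; apply: fg.
by apply: fin_bigcap_measurable => // k _; exact: mf.
Qed.

Lemma measurable_fibers_bool (f : T -> bool) :
  measurable_fun setT f -> measurable_fibers f.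
Proof. by move=> mf b; rewrite -[_ @^-1` _]setTI; exact: mf. Qed.

Lemma measurable_fibers_nat (f : T -> nat) :
  (forall m, measurable [set w | (m < f w)%N]) -> measurable_fibers f.
Proof.
move=> mf [|m].
  have -> : f @^-1` [set 0%N] = ~` [set w | (0 < f w)%N].
    by apply/seteqP; split=> w /= => [->|/negP]; rewrite // lt0n negbK => /eqP.
  exact: measurableC.
have -> : f @^-1` [set m.+1] = [set w | (m < f w)%N] `\` [set w | (m.+1 < f w)%N].
  apply/seteqP; split=> w /=; first by move=> ->; rewrite ltnn.
  by case=> lt_m /negP; rewrite -leqNgt => le_f; apply/eqP; rewrite eqn_leq le_f.
exact: measurableD.
Qed.

(* The sorted list depends on w only through the finite comparison table M w. *)
Lemma measurable_fibers_sort (X : countType) (s : seq X) (le : T -> rel X) :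
  (forall a b, a \in s -> b \in s -> measurable_fun setT (fun w => le w a b)) ->
  measurable_fibers (fun w => sort (le w) s).
Proof.
move=> mle; pose h (i : 'I_(size s)) := tnth (in_tuple s) i.
pose M w : {ffun 'I_(size s) * 'I_(size s) -> bool} :=
  [ffun ij => le w (h ij.1) (h ij.2)].
have mM : measurable_fibers M.
  apply: measurable_fibers_ffun => ij; apply: measurable_fibers_bool.
  by apply: mle; exact: mem_tnth.
have sortE w : sort (le w) s =
    map h (sort (fun i j => M w (i, j)) (enum 'I_(size s))).
  have -> : sort (le w) s = sort (le w) (map h (enum 'I_(size s))).
    by rewrite map_tnth_enum.
  rewrite sort_map.
  by congr (map h (sort _ _)); apply: funext => i; apply: funext => j; rewrite ffunE.
rewrite (funext sortE).
exact: (measurable_fibers_comp (fun m : {ffun _ -> bool} =>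
  map h (sort (fun i j => m (i, j)) (enum 'I_(size s)))) mM).
Qed.

End MeasurableFibers.

Section Clock.
Context (R : realType) (w : nat -> R).
Hypothesis w_gt0 : forall k, 0 < w k.
Hypothesis ring_time_unbounded : forall M : R, exists k, M < ring_time w k.

Lemma ring_time_ltS k : ring_time w k < ring_time w k.+1.
Proof. by rewrite /ring_time [X in _ < X]big_ord_recr /= ltrDl. Qed.

Lemma ring_time_le : {homo ring_time w : k l / (k <= l)%N >-> k <= l}.
Proof.
by apply: homo_leq => [//|? ? ?|k]; [exact: le_trans | exact/ltW/ring_time_ltS].
Qed.

Lemma ring_time_le_nrings t k : (ring_time w k <= t) = (k < nrings w t)%N.
Proof.
have [m [t_lt_m m_min]] : exists m, t < ring_time w m /\
    forall k, t < ring_time w k -> (m <= k)%N.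
  have ex_gt := ring_time_unbounded t.
  by exists (ex_minn ex_gt); case: ex_minnP.
have le_tE j : (ring_time w j <= t) = (j < m)%N.
  apply/idP/idP => [le_t|lt_jm]; last first.
    by rewrite leNgt; apply/negP => /m_min; rewrite leqNgt lt_jm.
  rewrite ltnNge; apply/negP => /ring_time_le le_mj.
  by move: (lt_le_trans t_lt_m le_mj); rewrite ltNge le_t.
have I_mE : [set k | ring_time w k <= t] = `I_m.
  by apply/seteqP; split=> j /=; rewrite le_tE.
by rewrite /nrings I_mE (@card_fset_set _ _ m).
Qed.

Lemma nrings_le : {homo nrings w : s t / s <= t >-> (s <= t)%N}.
Proof.
move=> s t le_st; case E: (nrings w s) => [//|n].
by rewrite -ring_time_le_nrings (le_trans _ le_st) // ring_time_le_nrings E.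
Qed.

Lemma lt_ring_time_nrings t : t < ring_time w (nrings w t).
Proof. by rewrite ltNge ring_time_le_nrings ltnn. Qed.

Lemma nrings_right_stable t s :
  t <= s -> s < ring_time w (nrings w t) -> nrings w s = nrings w t.
Proof.
move=> le_ts lt_s; apply/eqP; rewrite eqn_leq (nrings_le le_ts) andbT.
by rewrite leqNgt -ring_time_le_nrings -ltNge.
Qed.

End Clock.

Lemma sorted_filter_cat (T : eqType) (e : rel T) (p : pred T) (s : seq T) :
  transitive e -> (forall x y, e x y -> p y -> p x) -> sorted e s ->
  s = filter p s ++ filter (predC p) s.
Proof.
move=> e_trans p_down; rewrite sorted_pairwise //.
elim: s => //= x s IH /andP[all_ex pw_s]; case: ifP => px /=.
  by rewrite -IH.
have not_p y : y \in s -> ~~ p y.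
  by move=> ys; apply: contraFN px; apply: p_down; exact: (allP all_ex).
rewrite (eq_in_filter (a2 := pred0)) ?filter_pred0; last by move=> y /not_p/negbTE.
by rewrite (eq_in_filter (a2 := predT)) ?filter_predT // => y /not_p.
Qed.

Section Paths.
Context (R : realType) (V : finType) (r : V -> V -> R) (Wc : V * V -> nat -> R).
Hypothesis Wc_gt0 : forall e, edge_ok r e -> forall k, 0 < Wc e k.
Hypothesis ring_time_unbounded :
  forall e, edge_ok r e -> forall M : R, exists k, M < ring_time (Wc e) k.

Lemma ring_events_le s t : s <= t ->
  ring_events r Wc s = filter (fun ev => ev.1 <= s) (ring_events r Wc t).
Proof.
move=> le_st; rewrite /ring_events filter_flatten -map_comp; congr flatten.
apply/eq_in_map => e; rewrite mem_filter => /andP[edge_e _] /=.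
have [w_gt0 w_unb] := (Wc_gt0 edge_e, ring_time_unbounded edge_e).
rewrite filter_map; congr map.
rewrite -(subnKC (nrings_le w_gt0 w_unb le_st)) iotaD filter_cat add0n.
have ltE k : (ring_time (Wc e) k <= s) = (k < nrings (Wc e) s)%N.
  exact: ring_time_le_nrings.
rewrite (eq_in_filter (a2 := predT)) => [|k]; last first.
  by rewrite mem_iota /= ltE add0n.
rewrite filter_predT (eq_in_filter (a2 := pred0)) => [|k]; last first.
  by rewrite mem_iota /= ltE => /andP[/leq_gtF].
by rewrite filter_pred0 cats0.
Qed.

Lemma crw_path_flow s t : s <= t ->
  exists f : V -> V, forall y, crw_path r Wc y t = f (crw_path r Wc y s).
Proof.
move=> le_st; set evs := sorted_ring_events r Wc t.
pose p : pred (R * (V * V)) := fun ev => ev.1 <= s.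
pose leev : rel (R * (V * V)) := fun a b => a.1 <= b.1.
have leev_total : total leev by move=> a b; exact: le_total.
have leev_trans : transitive leev by move=> a b c; exact: le_trans.
exists (fun z => foldl (@crw_step R V) z (filter (predC p) evs)) => y.
rewrite /crw_path -/evs {1}(@sorted_filter_cat _ leev p evs); last 3 first.
- exact: leev_trans.
- by move=> a b le_ab /(le_trans le_ab).
- exact: sort_sorted.
rewrite foldl_cat /evs /sorted_ring_events (ring_events_le le_st).
by congr (foldl _ (foldl _ _ _) _); rewrite filter_sort.
Qed.

(* The witness is the first ring after t on any edge (t + 1 if there is none). *)
Lemma ring_events_right_stable t : exists2 u, t < u &
  forall s, t <= s -> s < u -> ring_events r Wc s = ring_events r Wc t.
Proof.
exists (\big[Order.min/t + 1]_(e | edge_ok r e) ring_time (Wc e) (nrings (Wc e) t)).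
  apply/bigmin_gtP; split=> [|e edge_e]; first by rewrite ltrDl.
  exact: lt_ring_time_nrings (Wc_gt0 edge_e) (ring_time_unbounded edge_e) t.
move=> s le_ts /bigmin_gtP[_ lt_s]; rewrite /ring_events; congr flatten.
apply/eq_in_map => e; rewrite mem_filter => /andP[edge_e _] /=.
have w_gt0 := Wc_gt0 edge_e; have w_unb := ring_time_unbounded edge_e.
by rewrite (nrings_right_stable w_gt0 w_unb le_ts (lt_s e edge_e)).
Qed.

Lemma coal_time_leE i v t : 0 <= t ->
  (coal_time (crw_path r Wc i) (crw_path r Wc v) <= t%:E)%E =
  (crw_path r Wc i t == crw_path r Wc v t).
Proof.
move=> t_ge0; apply/idP/idP => [|/eqP meet_t]; last first.
  by apply: ereal_inf_lbound; exists t.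
apply: contraLR => /eqP apart_t; rewrite -ltNge.
have [u lt_tu stable] := ring_events_right_stable t.
apply: (@lt_le_trans _ _ u%:E); first by rewrite lte_fin.
apply/ereal_infP => _ [s [_ meet_s] <-]; rewrite lee_fin leNgt.
apply/negP => lt_su; apply: apart_t; have [le_st|lt_ts] := lerP s t.
  by have [f flow] := crw_path_flow le_st; rewrite !flow meet_s.
by move: meet_s; rewrite /crw_path /sorted_ring_events stable // ltW.
Qed.

Lemma N_countE v t : 0 <= t ->
  N_count r Wc v t = #|[set i | crw_path r Wc i t == crw_path r Wc v t]%SET|.
Proof.
move=> t_ge0; apply: eq_card => i; rewrite finset.inE -coal_time_leE //.
by apply/idP/idP => [/set_mem|/mem_set].
Qed.

End Paths.

Definition crw_jump (V : eqType) (z : V) (e : V * V) : V := if z == e.1 then e.2 else z.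

Lemma foldl_crw_step (R : realType) (V : finType) x (evs : seq (R * (V * V))) :
  foldl (@crw_step R V) x evs = foldl (@crw_jump V) x (map snd evs).
Proof. by elim: evs x => //= ev evs IH x; rewrite IH. Qed.

Section PositionsMeasurable.
Context (R : realType) (V : finType) (r : V -> V -> R)
  (d : measure_display) (Omega : measurableType d)
  (W : V * V -> nat -> Omega -> R) (t : R).
Hypothesis W_gt0 : forall w e, edge_ok r e -> forall k, 0 < W e k w.
Hypothesis ring_time_unbounded : forall w e, edge_ok r e ->
  forall M : R, exists k, M < ring_time (fun j => W e j w) k.

Let clock_events := [set A | exists i B, [set i | edge_ok r i.1] i /\
  measurable B /\ A = (fun i => W i.1 i.2) i @^-1` B].
(* Omega with the sigma-algebra of the clocks: a set is measurable in T iff it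
   satisfies generated_events. *)
Let T := g_sigma_algebraType clock_events.
Let Wc (w : Omega) := fun e j => W e j w.

Lemma measurable_ring_time e k : edge_ok r e ->
  measurable_fun setT (fun w : T => ring_time (Wc w e) k).
Proof.
move=> edge_e; apply: measurable_sum => j _ B mB; rewrite setTI.
by apply: sub_gen_smallest; exists (e, nat_of_ord j), B.
Qed.

Lemma measurable_fibers_nrings e : edge_ok r e ->
  measurable_fibers (fun w : T => nrings (Wc w e) t).
Proof.
move=> edge_e; apply: measurable_fibers_nat => m.
have -> : [set w : T | (m < nrings (Wc w e) t)%N] =
    [set w | ring_time (Wc w e) m <= t].
  by apply/seteqP; split=> w /=;
    rewrite (ring_time_le_nrings (W_gt0 w edge_e) (ring_time_unbounded w edge_e)).
exact: (measurable_fibers_bool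
  (measurable_fun_ler (measurable_ring_time m edge_e) (measurable_cst t)) true).
Qed.

(* The count of a non-edge, whose clock may be arbitrary, is set to 0. *)
Definition ring_counts (w : Omega) : {ffun V * V -> nat} :=
  [ffun e => if edge_ok r e then nrings (Wc w e) t else 0%N].

Lemma measurable_fibers_ring_counts : measurable_fibers (ring_counts : T -> _).
Proof.
apply: measurable_fibers_ffun => e; case: (boolP (edge_ok r e)) => edge_e.
  exact: measurable_fibers_nrings.
exact: measurable_fibers_cst.
Qed.

Definition ring_indices (c : {ffun V * V -> nat}) : seq ((V * V) * nat) :=
  flatten [seq [seq (e, k) | k <- iota 0 (c e)] | e <- enum [set: V * V] & edge_ok r e].

Lemma ring_indices_edge c a : a \in ring_indices c -> edge_ok r a.1.
Proof.
case/flattenP => _ /mapP[e + ->] /mapP[k _ ->].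
by rewrite mem_filter => /andP[].
Qed.

Definition ring_order (w : Omega) : rel ((V * V) * nat) :=
  fun a b => ring_time (Wc w a.1) a.2 <= ring_time (Wc w b.1) b.2.

Lemma crw_pathE w x : crw_path r (Wc w) x t = foldl (@crw_jump V) x
  [seq a.1 | a <- sort (ring_order w) (ring_indices (ring_counts w))].
Proof.
rewrite /crw_path foldl_crw_step /sorted_ring_events.
have -> : ring_events r (Wc w) t =
    [seq (ring_time (Wc w a.1) a.2, a.1) | a <- ring_indices (ring_counts w)].
  rewrite /ring_events /ring_indices map_flatten -map_comp; congr flatten.
  apply/eq_in_map => e; rewrite mem_filter => /andP[edge_e _] /=.
  by rewrite -map_comp ffunE edge_e.
by rewrite sort_map -!map_comp.
Qed.

Lemma measurable_fibers_positions :
  measurable_fibers (fun w : T => [ffun x => crw_path r (Wc w) x t]).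
Proof.
pose run (evs : seq ((V * V) * nat)) : {ffun V -> V} :=
  [ffun x => foldl (@crw_jump V) x (map fst evs)].
have -> : (fun w : T => [ffun x => crw_path r (Wc w) x t]) =
    fun w => run (sort (ring_order w) (ring_indices (ring_counts w))).
  by apply: funext => w; apply/ffunP => x; rewrite !ffunE crw_pathE.
apply: (measurable_fibers_bind (c := ring_counts : T -> _)
  (F := fun c w => run (sort (ring_order w) (ring_indices c)))).
  exact: measurable_fibers_ring_counts.
move=> c; apply: (measurable_fibers_comp run).
apply: measurable_fibers_sort => a b /ring_indices_edge edge_a /ring_indices_edge edge_b.
by apply: measurable_fun_ler; exact: measurable_ring_time.
Qed.

End PositionsMeasurable.

Lemma ge0_integral_finite_range d (T : measurableType d) (R : realType)
    (mu : {measure set T -> \bar R}) (K : finType) (X : T -> K) (F : K -> R) :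
  measurable_fibers X -> (forall k, 0 <= F k) ->
  (\int[mu]_w (F (X w))%:E = \sum_k (F k)%:E * mu (X @^-1` [set k]))%E.
Proof.
move=> mX F_ge0; pose ind k w : \bar R := (\1_(X @^-1` [set k]) w)%:E.
have mind k : measurable_fun setT (ind k).
  by apply/measurable_EFinP; exact: measurable_indic.
have Find_ge0 k w : (0 <= (F k)%:E * ind k w)%E.
  by rewrite -EFinM lee_fin mulr_ge0.
transitivity (\int[mu]_w (\sum_k (F k)%:E * ind k w))%E.
  apply: eq_integral => w _; rewrite (bigD1 (X w)) //= /ind indicE mem_set // mule1.
  rewrite big1 ?adde0 // => k /negbTE Xw_neq_k; rewrite indicE memNset ?mule0 //.
  by move=> /= Xw_eq_k; rewrite Xw_eq_k eqxx in Xw_neq_k.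
rewrite (ge0_integral_sum _ _ (fun k => measurable_funeM _ (mind k))) //.
apply: eq_bigr => k _; rewrite ge0_integralZl ?lee_fin //.
  by rewrite integral_indic // setIT.
by move=> w _; rewrite lee_fin.
Qed.

Lemma sum_inv_card_fiber (R : numFieldType) (V U : finType) (phi : V -> U) :
  \sum_v (#|[set i | phi i == phi v]%SET|%:R : R)^-1 = #|[set phi x | x : V]%SET|%:R.
Proof.
rewrite (partition_big phi (mem [set phi x | x : V]%SET)); last first.
  by move=> v _; exact: imset_f.
rewrite -sumr_const; apply: eq_bigr => _ /imsetP[x _ ->].
rewrite (eq_bigr (fun=> (#|[set i | phi i == phi x]%SET|%:R : R)^-1)); last first.
  by move=> v /eqP ->.
rewrite (eq_bigl (fun v => v \in [set i | phi i == phi x]%SET)); last first.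
  by move=> v; rewrite finset.inE.
rewrite sumr_const -[_ *+ _]mulr_natr mulVf // pnatr_eq0 -lt0n.
by apply/card_gt0P; exists x; rewrite finset.inE.
Qed.

Lemma expectation_inv_card_fiber (R : realType) d (Omega : measurableType d)
    (P : probability Omega R) (V U : finType)
    (iota : Omega -> V) (Phi : Omega -> {ffun V -> U}) :
  measurable_fibers iota -> measurable_fibers Phi ->
  (forall v, P (iota @^-1` [set v]) = (#|V|%:R^-1)%:E) ->
  (forall v phi, P (iota @^-1` [set v] `&` Phi @^-1` [set phi]) =
     (P (iota @^-1` [set v]) * P (Phi @^-1` [set phi]))%E) ->
  ('E_P[fun w => (#|[set Phi w x | x : V]%SET|%:R : R)] * (#|V|%:R^-1)%:E =
   'E_P[fun w => ((#|[set x | Phi w x == Phi w (iota w)]%SET|%:R)^-1)%R])%E.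
Proof.
move=> m_iota m_Phi P_iota indep.
pose img (phi : {ffun V -> U}) : R := #|[set phi x | x : V]%SET|%:R.
pose inv_fib (vphi : V * {ffun V -> U}) : R :=
  (#|[set x | vphi.2 x == vphi.2 vphi.1]%SET|%:R)^-1.
pose p phi := fine (P (Phi @^-1` [set phi])).
have P_Phi phi : P (Phi @^-1` [set phi]) = (p phi)%:E.
  by rewrite fineK // fin_num_measure.
have pairE vphi : (fun w => (iota w, Phi w)) @^-1` [set vphi] =
    iota @^-1` [set vphi.1] `&` Phi @^-1` [set vphi.2].
  by case: vphi => v phi; apply/seteqP; split=> w /= => [[-> ->]|[-> ->]].
have imgE : ('E_P[fun w => img (Phi w)] = \sum_phi (img phi * p phi)%:E)%E.
  rewrite unlock ge0_integral_finite_range //.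
  by apply: eq_bigr => phi _; rewrite EFinM -P_Phi.
have inv_fibE : ('E_P[fun w => inv_fib (iota w, Phi w)] =
    \sum_vphi (inv_fib vphi * (#|V|%:R^-1 * p vphi.2))%:E)%E.
  rewrite unlock (ge0_integral_finite_range _ (X := fun w => (iota w, Phi w))).
  - apply: eq_bigr => -[v phi] _.
    by rewrite !EFinM -P_Phi -(P_iota v) -indep -(pairE (v, phi)).
  - by move=> vphi; rewrite pairE; exact: measurableI.
  - by move=> vphi; rewrite invr_ge0.
rewrite imgE inv_fibE !sumEFin -EFinM; congr EFin.
rewrite -(pair_bigA _ (fun v phi => inv_fib (v, phi) * (#|V|%:R^-1 * p phi))).
rewrite exchange_big mulr_suml; apply: eq_bigr => phi _.
by rewrite -mulr_suml sum_inv_card_fiber -mulrA [p phi * _]mulrC.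
Qed.

Lemma generated_events_measurable d (T : measurableType d) (R : realType)
    (I : Type) (S : set I) (X : I -> T -> R) :
  (forall i, S i -> measurable_fun setT (X i)) ->
  forall A, generated_events S X A -> measurable A.
Proof.
move=> mX; apply: smallest_sub; first exact: sigma_algebra_measurable.
by move=> _ [i [B [Si [mB ->]]]]; rewrite -[X in measurable X]setTI; exact: mX.
Qed.

Unset Implicit Arguments.

Theorem lemma2p1 (R : realType) (V : finType) (r : V -> V -> R)
  (d : measure_display) (Omega : measurableType d) (P : probability Omega R)
  (W : V * V -> nat -> Omega -> R) (iota : Omega -> V) :
  (* symmetric, irreducible rates *)
  (forall x y : V, x != y -> 0 <= r x y) ->
  (forall x y : V, r x y = r y x) ->
  irreducible_rates r ->
  (* clock of edge e: i.i.d. Exp(r e) inter-arrival times W e 0, W e 1, ... *)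
  (forall e k, edge_ok r e -> measurable_fun setT (W e k)) ->
  (forall e k, edge_ok r e -> forall B : set R, measurable B ->
     P (W e k @^-1` B) = exponential_prob (r e.1 e.2) B) ->
  (* all clocks of all edges are independent *)
  mutually_independent P [set i | edge_ok r i.1] (fun i => W i.1 i.2) ->
  (* realisations are counting processes: positive gaps, finitely many rings
     in bounded intervals *)
  (forall w e k, edge_ok r e -> 0 < W e k w) ->
  (forall w e (M : R), edge_ok r e ->
     exists k, M < ring_time (fun j => W e j w) k) ->
  (* iota uniform on V and independent of everything else *)
  (forall v, measurable [set w | iota w = v]) ->
  (forall v, P [set w | iota w = v] = ((#|V|%:R)^-1)%:E) ->
  (forall v A, generated_events [set i | edge_ok r i.1] (fun i => W i.1 i.2) A ->
     P ([set w | iota w = v] `&` A) = (P [set w | iota w = v] * P A)%E) ->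
  forall t : R, 0 <= t ->
  ('E_P[fun w => (#|occupied r (fun e j => W e j w) t|%:R : R)]
     * ((#|V|%:R)^-1)%:E
   = 'E_P[fun w => (((N_count r (fun e j => W e j w) (iota w) t)%:R)^-1)%R])%E.
Proof.
move=> _ _ _ mW _ _ W_gt0 W_unb m_iota P_iota iota_indep t t_ge0.
have W_gt0' w e edge_e k : 0 < W e k w := W_gt0 w e k edge_e.
have W_unb' w e edge_e M : exists k, M < ring_time (fun j => W e j w) k :=
  W_unb w e M edge_e.
pose Phi w : {ffun V -> V} := [ffun x => crw_path r (fun e j => W e j w) x t].
have gen_Phi phi : generated_events [set i | edge_ok r i.1]
    (fun i => W i.1 i.2) (Phi @^-1` [set phi]).
  exact: measurable_fibers_positions t W_gt0' W_unb' phi.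
have -> : (fun w => (#|occupied r (fun e j => W e j w) t|%:R : R)) =
    (fun w => #|[set Phi w x | x : V]%SET|%:R).
  apply: funext => w; congr (_%:R); apply: eq_card => y.
  by apply/imsetP/imsetP => -[x _ ->]; exists x; rewrite ?ffunE.
have -> : (fun w => ((N_count r (fun e j => W e j w) (iota w) t)%:R)^-1) =
    (fun w => (#|[set x | Phi w x == Phi w (iota w)]%SET|%:R : R)^-1).
  apply: funext => w; rewrite (N_countE (W_gt0' w) (W_unb' w)) //.
  by congr (_%:R^-1); apply: eq_card => x; rewrite !finset.inE !ffunE.
apply: expectation_inv_card_fiber => [|phi|//|v phi].
- exact: m_iota.
- exact: generated_events_measurable (fun i => mW i.1 i.2) _ (gen_Phi phi).
- exact: iota_indep (gen_Phi phi).
Qed.
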